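(* Let $n \ge 1$ and $1 \le m \le n$ be integers, and put $s_k = 8(n-k)$ and $M_k = 2^{k-1}(8n+16) - 16$ for $k \ge 1$. Consider Boolean variables $x_{(k,i)} \in \{0,1\}$ for $k \in \{1,\dots,m\}$ and $i \in \{1,2,3,4,5,6,A,B\}$ ($8m$ variables), and write an assignment as a bit string listing the variables in the order $(m,1),\dots,(m,6),(m,A),(m,B),(m-1,1),\dots,(m-1,B),\dots,(1,1),\dots,(1,B)$. For each $k$ define (writing $x_i$ for $x_{(k,i)}$) $$\begin{aligned} g_k(x) ={}& -(2M_k+13)x_1 - (M_k+5)x_2 - (M_k+3)x_3 - (M_k+s_k+7)x_4 - x_5 - (M_k+1)x_6 - (s_k+5)x_A - (s_k+3)x_B \\ &+ (M_k+6)x_1x_2 + (M_k+4)x_2x_3 + (M_k+2)x_3x_6 + (M_k+6)x_1x_4 + (M_k+4)x_4x_5 - (M_k+2)x_5x_6 \\ &+ (s_k+4)x_Ax_B - 2x_1x_B + (s_k+4)x_2x_B + (s_k+2)x_4x_A + (s_k+2)x_4x_B \\ &- (s_k+4)x_2x_Ax_B - (s_k+2)x_4x_Ax_B, \end{aligned}$$ and for $P \in \{0,1\}$ define the fitness function $$f^{P}(x) = \sum_{k=1}^{m} g_k(x) + \sum_{k=2}^{m} M_k\, x_{(k,6)}x_{(k-1,1)} + \sum_{k=1}^{m-1} s_k\, x_{(k,B)}x_{(k+1,A)} + 8n\, x_{(1,6)}x_{(1,A)} + P\,(2M_m+16)\,x_{(m,1)}.$$ Let $a = 0^{8m}$ and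 $b = 111110\,01\,0^{8(m-1)}$. Then: (1) in the fitness landscape of $f^{1}$ there is exactly one ascent starting from $a$, and it ends at the local peak $b$; (2) in the fitness landscape of $f^{0}$ there is exactly one ascent starting from $b$, and it ends at the local peak $a$. Both ascents have length $T_m = 10(2^m - 1)$.
   Context: Two assignments in $\{0,1\}^{8m}$ are adjacent if they differ in exactly one variable. For a fitness function $f$, an assignment $x^*$ is a local peak if $f(y) \le f(x^* )$ for every assignment $y$ adjacent to $x^*$. An ascent from $x^0$ is a sequence $x^0, x^1, \dots, x^T$ of assignments such that $x^{t}$ and $x^{t+1}$ are adjacent and $f(x^{t+1}) > f(x^t)$ for each $t$, and $x^T$ is a local peak; its length is $T$. The fitness landscape of $f$ is $f$ together with this adjacency structure. *)

From mathcomp Require Import all_boot all_order all_algebra.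
Set Implicit Arguments. Unset Strict Implicit. Unset Printing Implicit Defensive.
Import Order.TTheory GRing.Theory Num.Theory.
Local Open Scope ring_scope.

(* Variables x_(k,i), k in {1..m}, i in {1,..,6,A,B}, encoded as
   (k-1, i-1) : 'I_m * 'I_8 with A = 7th, B = 8th position. *)
Definition asg (m : nat) := {ffun 'I_m * 'I_8 -> bool}.

Definition adjacent m (x y : asg m) : bool := #|[set v | x v != y v]| == 1%N.

Definition local_peak m (f : asg m -> int) (x : asg m) : Prop :=
  forall y, adjacent x y -> f y <= f x.

(* An ascent x^0, x^1, ..., x^T is represented by its start x0 and the list
   p = [:: x^1; ...; x^T]; its length is size p. *)
Definition ascent_step m (f : asg m -> int) (x y : asg m) : bool :=
  adjacent x y && (f x < f y).

Definition ascent m (f : asg m -> int) (x0 : asg m) (p : seq (asg m)) : Prop :=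
  path (ascent_step f) x0 p /\ local_peak f (last x0 p).

(* Value of x_(k,i) as an integer, with k in 1..m and i in 1..8
   (i = 7 is A, i = 8 is B). Out-of-range indices give 0 (never used). *)
Definition X m (x : asg m) (k i : nat) : int :=
  match @insub nat (fun j => j < m)%N _ k.-1, @insub nat (fun j => j < 8)%N _ i.-1 with
  | Some k', Some i' => ((x (k', i') : nat) : int)
  | _, _ => 0
  end.

Definition iA := 7%N.
Definition iB := 8%N.

Definition sk (n k : nat) : int := 8 * (n%:Z - k%:Z).
Definition Mk (n k : nat) : int := (2 ^ k.-1)%:Z * (8 * n + 16)%:Z - 16.

Definition g (n m : nat) (k : nat) (x : asg m) : int :=
  let M := Mk n k in let s := sk n k in
  let x1 := X x k 1 in let x2 := X x k 2 in let x3 := X x k 3 in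
  let x4 := X x k 4 in let x5 := X x k 5 in let x6 := X x k 6 in
  let xA := X x k iA in let xB := X x k iB in
    - (2 * M + 13) * x1 - (M + 5) * x2 - (M + 3) * x3 - (M + s + 7) * x4
    - x5 - (M + 1) * x6 - (s + 5) * xA - (s + 3) * xB
    + (M + 6) * x1 * x2 + (M + 4) * x2 * x3 + (M + 2) * x3 * x6
    + (M + 6) * x1 * x4 + (M + 4) * x4 * x5 - (M + 2) * x5 * x6
    + (s + 4) * xA * xB - 2 * x1 * xB + (s + 4) * x2 * xB
    + (s + 2) * x4 * xA + (s + 2) * x4 * xB
    - (s + 4) * x2 * xA * xB - (s + 2) * x4 * xA * xB.

Definition fit (n m : nat) (P : bool) (x : asg m) : int :=
  \sum_(1 <= k < m.+1) g n k x
  + \sum_(2 <= k < m.+1) Mk n k * X x k 6 * X x k.-1 1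
  + \sum_(1 <= k < m) sk n k * X x k iB * X x k.+1 iA
  + (8 * n)%:Z * X x 1 6 * X x 1 iA
  + (P : nat)%:Z * (2 * Mk n m + 16) * X x m 1.

Definition asg_a (m : nat) : asg m := [ffun _ => false].

(* b = 111110 01 0^{8(m-1)}: in block k = m, x1..x5 = 1, x6 = 0, xA = 0, xB = 1;
   all other variables 0. *)
Definition asg_b (m : nat) : asg m :=
  [ffun v => (val v.1 == m.-1) && (val v.2 \in [:: 0; 1; 2; 3; 4; 7]%N)].

From mathcomp Require Import all_boot all_order all_algebra.
From mathcomp Require Import zify ring.
Set Implicit Arguments. Unset Strict Implicit. Unset Printing Implicit Defensive.
Import Order.TTheory GRing.Theory Num.Theory.
Local Open Scope ring_scope.

(* Flipping one variable of block k changes the fitness by a gain that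
   depends only on the bits of block k, on x6 and xA of block k+1 (P instead
   of x6 for the top block) and on x1 and xB of block k-1, and that is affine
   in the weights M_k, s_k.  As s_k >= 0 and M_k >= s_k + 8, with equality
   for k = 1, the sign of each gain in the finitely many block states met
   along the ascent is settled by a computation on integers.

   The ascent is then forced block by block.  In its up-run a block flips
   x1 x2 x3 x6, which makes the block below perform its own up-run; then
   xA x4 x5 x6, which makes the block below run down again; and finally
   xA xB.  The down-run is the same with x2 x3 and x4 x5 exchanged.  While
   the block below runs, the waiting block has no improving flip whatever x1
   of that block, whose xB only changes at its very last move.  Induction on
   the blocks shows that exactly one flip improves at every state, and the
   lengths satisfy T_k = 2 T_(k-1) + 10. *)

Notation b2i b := (Posz (nat_of_bool b)).

(* 0-based indices: [bit x k i] is x_(k+1, i+1), with i = 6, 7 for A, B. *)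
Definition bit m (x : asg m) (k i : nat) : int := X x k.+1 i.+1.

Definition flip m (x : asg m) (p : nat * nat) : asg m :=
  [ffun w : 'I_m * 'I_8 =>
     if ((w.1 : nat) == p.1) && ((w.2 : nat) == p.2) then ~~ x w else x w].

Lemma X_out m (x : asg m) k i : (m <= k)%N -> X x k.+1 i = 0.
Proof. by move=> h; rewrite /X /= insubN // -leqNgt. Qed.

Lemma X_flip m (x : asg m) p k i : (p.1 < m)%N -> (p.2 < 8)%N ->
  X (flip x p) k i = if (k.-1 == p.1) && (i.-1 == p.2) then 1 - X x k i else X x k i.
Proof.
move=> hp1 hp2; rewrite /X.
case: (insubP 'I_m k.-1) => [k' _ ek|hk]; case: (insubP 'I_8 i.-1) => [i' _ ei|hi] /=.
- by rewrite ffunE ek ei; case: ifP => //; case: (x _).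
- by case: (i.-1 =P p.2) => [e|]; [rewrite e hp2 in hi | rewrite andbF].
- by case: (k.-1 =P p.1) => [e|//]; rewrite e hp1 in hk.
- by case: (k.-1 =P p.1) => [e|//]; rewrite e hp1 in hk.
Qed.

Lemma bit01 m (x : asg m) k i : bit x k i \in [:: 0; 1].
Proof. by rewrite /bit /X; case: insub => [a|//]; case: insub => [b|//]; case: (x (a, b)). Qed.

Lemma bit_flip m (x : asg m) p k i : (p.1 < m)%N -> (p.2 < 8)%N ->
  bit (flip x p) k i = if (k == p.1) && (i == p.2) then 1 - bit x k i else bit x k i.
Proof. exact: X_flip. Qed.

Definition gblock (M s : int) (b : nat -> int) : int :=
  let x1 := b 0%N in let x2 := b 1%N in let x3 := b 2%N in
  let x4 := b 3%N in let x5 := b 4%N in let x6 := b 5%N in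
  let xA := b 6%N in let xB := b 7%N in
    - (2 * M + 13) * x1 - (M + 5) * x2 - (M + 3) * x3 - (M + s + 7) * x4
    - x5 - (M + 1) * x6 - (s + 5) * xA - (s + 3) * xB
    + (M + 6) * x1 * x2 + (M + 4) * x2 * x3 + (M + 2) * x3 * x6
    + (M + 6) * x1 * x4 + (M + 4) * x4 * x5 - (M + 2) * x5 * x6
    + (s + 4) * xA * xB - 2 * x1 * xB + (s + 4) * x2 * xB
    + (s + 2) * x4 * xA + (s + 2) * x4 * xB
    - (s + 4) * x2 * xA * xB - (s + 2) * x4 * xA * xB.

Lemma g_gblock n m (x : asg m) k : g n k.+1 x = gblock (Mk n k.+1) (sk n k.+1) (bit x k).
Proof. by []. Qed.

Lemma eq_gblock M s b b' : {in gtn 8, b =1 b'} -> gblock M s b = gblock M s b'.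
Proof. by move=> e; rewrite /gblock !e. Qed.

Definition toggle (b : nat -> int) (i : nat) : nat -> int :=
  fun j => if j == i then 1 - b j else b j.

(* The cross-block terms met by a flip in block k, with their weights
   rewritten by M_(k+1) = 2 M_k + 16 and s_(k-1) = s_k + 8.  The lowest
   block ([first]) has no block below, and its term 8n x6 xA has weight
   8n = s_1 + 8 = M_1; [p1] and [pB] are then ignored. *)
Definition coupling (first : bool) (M s : int) (b : nat -> int) (n6 nA p1 pB : int)
    (i : nat) : int :=
  match i with
  | 0 => (2 * M + 16) * n6
  | 5 => if first then (s + 8) * b 6%N else M * p1
  | 6 => (s + 8) * (if first then b 5%N else pB)
  | 7 => s * nA
  | _ => 0
  end.

Definition gain first M s b n6 nA p1 pB i : int :=
  gblock M s (toggle b i) - gblock M s b + (1 - 2 * b i) * coupling first M s b n6 nA p1 pB i.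

Ltac case_ifs := repeat (case: ifP => ?); try (by ring); try lia.

Lemma sumr_nat_diff a b (F G : nat -> int) c :
  (forall k, (a <= k < b)%N -> k != c -> F k = G k) ->
  \sum_(a <= k < b) F k - \sum_(a <= k < b) G k =
    if (a <= c < b)%N then F c - G c else 0.
Proof.
elim: b => [|b IH] h; first by rewrite !big_geq // ltn0 andbF subrr.
case: (leqP a b) => hab; last by rewrite !big_geq // subrr; case: ifP => //; lia.
rewrite !big_nat_recr //= opprD addrACA IH; last by move=> k hk; apply: h; lia.
case: (eqVneq b c) => [<-|hbc]; first by rewrite ltnn andbF add0r hab ltnSn.
rewrite (h b) ?hbc ?hab ?ltnSn // subrr addr0 ltnS (leq_eqVlt c) (eq_sym c).
by rewrite (negbTE hbc).
Qed.

Section FlipDifference.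
Variables (n m : nat) (P : bool) (x : asg m) (k i : nat).
Hypotheses (hk : (k < m)%N) (hi : (i < 8)%N).

Let X_flipped j i' : X (flip x (k, i)) j i' =
  if (j.-1 == k) && (i'.-1 == i) then 1 - X x j i' else X x j i'.
Proof. exact: X_flip. Qed.

Lemma blocks_flip_diff :
  \sum_(1 <= j < m.+1) g n j (flip x (k, i)) - \sum_(1 <= j < m.+1) g n j x =
  gblock (Mk n k.+1) (sk n k.+1) (toggle (bit x k) i) - gblock (Mk n k.+1) (sk n k.+1) (bit x k).
Proof.
rewrite (sumr_nat_diff (c := k.+1)) => [|j hj hjk].
  rewrite ifT; last by lia.
  rewrite !g_gblock; congr (_ - _); apply: eq_gblock => i' _.
  by rewrite /bit X_flipped /toggle /= eqxx.
case: j hj hjk => [|j] // hj hjk; rewrite !g_gblock; apply: eq_gblock => i' _.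
by rewrite /bit X_flipped; case_ifs.
Qed.

Lemma chain6_flip_diff :
  \sum_(2 <= j < m.+1) Mk n j * X (flip x (k, i)) j 6 * X (flip x (k, i)) j.-1 1
  - \sum_(2 <= j < m.+1) Mk n j * X x j 6 * X x j.-1 1 =
   (if (i == 5)%N && (0 < k)%N then Mk n k.+1 * (1 - 2 * X x k.+1 6) * X x k 1 else 0)
   + (if (i == 0)%N && (k.+1 < m)%N then Mk n k.+2 * X x k.+2 6 * (1 - 2 * X x k.+1 1) else 0).
Proof.
rewrite (sumr_nat_diff (c := if i == 5%N then k.+1 else if i == 0%N then k.+2 else 0%N));
  move: hi X_flipped; case: i => [|[|[|[|[|[|[|[|?]]]]]]]] //= _ Xf;
  first [by move=> j hj hjc; rewrite !Xf; case_ifs | rewrite !Xf; case_ifs].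
Qed.

Lemma chainB_flip_diff :
  \sum_(1 <= j < m) sk n j * X (flip x (k, i)) j iB * X (flip x (k, i)) j.+1 iA
  - \sum_(1 <= j < m) sk n j * X x j iB * X x j.+1 iA =
   (if (i == 7)%N && (k.+1 < m)%N then sk n k.+1 * (1 - 2 * X x k.+1 8) * X x k.+2 7 else 0)
   + (if (i == 6)%N && (0 < k)%N then sk n k * X x k 8 * (1 - 2 * X x k.+1 7) else 0).
Proof.
rewrite (sumr_nat_diff (c := if i == 7%N then k.+1 else if i == 6%N then k else 0%N));
  move: hi X_flipped; rewrite /iA /iB; case: i => [|[|[|[|[|[|[|[|?]]]]]]]] //= _ Xf;
  first [by move=> j hj hjc; rewrite !Xf; case_ifs | rewrite !Xf; case_ifs].
Qed.

Lemma base_flip_diff :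
  (8 * n)%N%:Z * X (flip x (k, i)) 1 6 * X (flip x (k, i)) 1 iA
  - (8 * n)%N%:Z * X x 1 6 * X x 1 iA =
   (if (k == 0)%N && (i == 5)%N then (8 * n)%N%:Z * (1 - 2 * X x 1 6) * X x 1 7 else 0)
   + (if (k == 0)%N && (i == 6)%N then (8 * n)%N%:Z * X x 1 6 * (1 - 2 * X x 1 7) else 0).
Proof.
move: hi X_flipped; rewrite /iA; case: i => [|[|[|[|[|[|[|[|?]]]]]]]] //= _ Xf.
all: by rewrite !Xf; case_ifs.
Qed.

Lemma top_flip_diff :
  b2i P * (2 * Mk n m + 16) * X (flip x (k, i)) m 1
  - b2i P * (2 * Mk n m + 16) * X x m 1 =
   if (k.+1 == m)%N && (i == 0)%N then b2i P * (2 * Mk n m + 16) * (1 - 2 * X x m 1)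
   else 0.
Proof.
by move: hi X_flipped; case: i => [|[|[|[|[|[|[|[|?]]]]]]]] //= _ Xf; rewrite !Xf; case_ifs.
Qed.

End FlipDifference.

Definition next6 m (P : bool) (x : asg m) (k : nat) : int :=
  bit x k.+1 5 + b2i (k.+1 == m) * b2i P.

Lemma Mk_recr n k : Mk n k.+2 = 2 * Mk n k.+1 + 16.
Proof. by rewrite /Mk /= expnS PoszM; ring. Qed.

Lemma sk_recl n k : sk n k = sk n k.+1 + 8.
Proof. by rewrite /sk; lia. Qed.

Lemma fit_flip n m P (x : asg m) k i : (k < m)%N -> (i < 8)%N ->
  fit n P (flip x (k, i)) - fit n P x =
  gain (k == 0)%N (Mk n k.+1) (sk n k.+1) (bit x k) (next6 P x k) (bit x k.+1 6)
       (bit x k.-1 0) (bit x k.-1 7) i.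
Proof.
move=> hk hi; rewrite /fit /gain.
have regroup (a1 a2 a3 a4 a5 b1 b2 b3 b4 b5 : int) :
  a1 + a2 + a3 + a4 + a5 - (b1 + b2 + b3 + b4 + b5) =
  (a1 - b1) + ((a2 - b2) + (a3 - b3) + (a4 - b4) + (a5 - b5)) by ring.
rewrite regroup blocks_flip_diff // chain6_flip_diff // chainB_flip_diff //.
rewrite base_flip_diff // top_flip_diff //; congr (_ + _).
rewrite /next6 /coupling /bit Mk_recr (sk_recl n k).
have base : (8 * n)%N%:Z = sk n 1 + 8 by rewrite /sk; lia.
case: (ltngtP k.+1 m) => hkm; [|lia|].
- case: k hk hkm => [|k] hk hkm; rewrite ?base /=;
    move: hi; case: i => [|[|[|[|[|[|[|[|?]]]]]]]] //= _; case_ifs.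
- have hmk : (m <= k.+1)%N by rewrite hkm.
  rewrite !(@X_out _ x k.+1 _ hmk).
  have -> : X x m 1 = X x k.+1 1 by rewrite hkm.
  have -> : Mk n m = Mk n k.+1 by rewrite hkm.
  case: k hk hkm {hmk} => [|k] hk hkm; rewrite ?base /=;
    move: hi; case: i => [|[|[|[|[|[|[|[|?]]]]]]]] //= _; case_ifs.
Qed.

Lemma gain_affine first M s b n6 nA p1 pB i :
  gain first M s b n6 nA p1 pB i =
    gain first 0 0 b n6 nA p1 pB i
    + M * (gain first 1 0 b n6 nA p1 pB i - gain first 0 0 b n6 nA p1 pB i)
    + s * (gain first 0 1 b n6 nA p1 pB i - gain first 0 0 b n6 nA p1 pB i).
Proof.
rewrite /gain /coupling /gblock /toggle.
by case: first; case: i => [|[|[|[|[|[|[|[|i]]]]]]]] /=; ring.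
Qed.

Definition weights (first : bool) (M s : int) := [/\ 0 <= s, s + 8 <= M & first -> M = s + 8].

Lemma weights_Mk_sk n k : (k < n)%N -> weights (k == 0)%N (Mk n k.+1) (sk n k.+1).
Proof.
move=> hk; rewrite /Mk /sk /=; have := expn_gt0 2 k; set E := (2 ^ k)%N => hE.
have hM : (8 * n + 16)%N%:Z <= E%:Z * (8 * n + 16)%N%:Z by rewrite ler_peMl //; lia.
by split; [lia | lia | move/eqP => k0; rewrite /E k0 expn0 mul1r; lia].
Qed.

(* Since c + M a + s b = (c + 8 a) + (M - s - 8) a + s (a + b), these
   conditions fix its sign for all weights. *)
Definition sign_cert (first pos : bool) (a b c : int) : bool :=
  if pos then [&& 0 < c + 8 * a, 0 <= a + b & first || (0 <= a)]
  else [&& c + 8 * a <= 0, a + b <= 0 & first || (a <= 0)].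

Lemma sign_certP first pos M s a b c :
  weights first M s -> sign_cert first pos a b c -> (0 < c + M * a + s * b) = pos.
Proof.
case: first => -[hs hM hfirst].
  by rewrite (hfirst isT); case: pos => /and3P [h1 h2 _]; [|apply/negbTE; rewrite -leNgt]; nia.
by case: pos => /and3P [h1 h2 h3]; [|apply/negbTE; rewrite -leNgt]; nia.
Qed.

Definition bits (S : seq bool) : nat -> int := fun i => b2i (nth false S i).

Definition toggle_at (S : seq bool) (i : nat) : seq bool := set_nth false S i (~~ nth false S i).

Lemma bits_toggle_at S i : bits (toggle_at S i) =1 toggle (bits S) i.
Proof. by move=> j; rewrite /bits /toggle nth_set_nth /=; case: eqP => [->|//]; case: nth. Qed.

Definition gain_cert first (S : seq bool) n6 nA p1 pB (tgt : option nat) : bool :=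
  all (fun i =>
    let g00 := gain first 0 0 (bits S) n6 nA p1 pB i in
    sign_cert first (Some i == tgt) (gain first 1 0 (bits S) n6 nA p1 pB i - g00)
      (gain first 0 1 (bits S) n6 nA p1 pB i - g00) g00) (iota 0 8).

Lemma gain_certP first M s S n6 nA p1 pB tgt :
  weights first M s -> gain_cert first S n6 nA p1 pB tgt ->
  forall i, (i < 8)%N -> (0 < gain first M s (bits S) n6 nA p1 pB i) = (Some i == tgt).
Proof.
move=> hw /allP cert i hi; rewrite gain_affine.
by apply: sign_certP hw _; apply: cert; rewrite mem_iota.
Qed.

Lemma eq_gain first M s b b' n6 nA p1 pB i : {in gtn 8, b =1 b'} -> (i < 8)%N ->
  gain first M s b n6 nA p1 pB i = gain first M s b' n6 nA p1 pB i.
Proof.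
move=> e hi; rewrite /gain (eq_gblock _ _ e) (@eq_gblock _ _ (toggle b i) (toggle b' i)).
  by rewrite e //; case: i hi => [|[|[|[|[|[|[|[|?]]]]]]]] //= _; rewrite ?e.
by move=> j hj; rewrite /toggle !e.
Qed.

Lemma gain_first_low M s b n6 nA p1 pB p1' pB' i :
  gain true M s b n6 nA p1 pB i = gain true M s b n6 nA p1' pB' i.
Proof. by case: i => [|[|[|[|[|[|[|[|?]]]]]]]]. Qed.

Definition pattern (c : bool) : seq bool :=
  if c then [:: true; true; true; true; true; false; false; true] else nseq 8 false.

Definition nextA_range (up : bool) : seq int := if up then [:: 0] else [:: 0; 1].

(* In state [S] of an up-run ([up]) or down-run of a block whose lower blocks
   are in pattern [c], bit [i] is the only improving flip of the block, and
   x6 = c, xB = ~~ up keep the blocks below and above at rest. *)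
Definition step_cert (up c : bool) (S : seq bool) (i : nat) : bool :=
  [&& (i < 8)%N, nth false S 5 == c, nth false S 7 == ~~ up &
      all (fun first => all (fun nA =>
             gain_cert first S (b2i up) nA (b2i c) (b2i c) (Some i))
           (nextA_range up)) [:: true; false]].

Fixpoint phase_cert (up c : bool) (S : seq bool) (l : seq nat) : bool :=
  if l is i :: l' then step_cert up c S i && phase_cert up c (toggle_at S i) l' else true.

(* In state [W], the block has no improving flip while the block below runs
   up ([up']) or down, whatever that block's x1; [W] also gives the x6 and xA
   that this run needs. *)
Definition wait_cert (up : bool) (W : seq bool) (up' : bool) : bool :=
  [&& nth false W 5 == up', nth false W 7 == ~~ up,
      b2i (nth false W 6) \in nextA_range up' &
      all (fun p1 => all (fun nA => gain_cert false W (b2i up) nA p1 (b2i (~~ up')) None)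
                       (nextA_range up)) [:: 0; 1]].

Definition first_moves (up : bool) : seq nat := if up then [:: 0; 1; 2; 5] else [:: 0; 3; 4; 5].
Definition second_moves (up : bool) : seq nat := if up then [:: 6; 3; 4; 5] else [:: 6; 1; 2; 5].
Definition last_moves : seq nat := [:: 6; 7].

Definition run_cert (up : bool) : bool :=
  let S1 := foldl toggle_at (pattern (~~ up)) (first_moves up) in
  let S2 := foldl toggle_at S1 (second_moves up) in
  [&& phase_cert up false (pattern (~~ up)) (first_moves up), wait_cert up S1 true,
      phase_cert up true S1 (second_moves up), wait_cert up S2 false,
      phase_cert up false S2 last_moves & foldl toggle_at S2 last_moves == pattern up].

Definition rest_cert (c : bool) : bool :=
  all (fun first => all (fun nA => gain_cert first (pattern c) (b2i c) nA 0 0 None)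
                      [:: 0; 1]) [:: true; false].

Lemma run_certP up : run_cert up.
Proof. by case: up; vm_compute. Qed.

Lemma rest_certP c : rest_cert c.
Proof. by case: c; vm_compute. Qed.

Fixpoint run (up : bool) (t : nat) : seq (nat * nat) :=
  if t is t'.+1 then
    [seq (t', i) | i <- first_moves up] ++ run true t' ++
    [seq (t', i) | i <- second_moves up] ++ run false t' ++ [seq (t', i) | i <- last_moves]
  else [::].

Lemma size_run up t : size (run up t) = (10 * (2 ^ t - 1))%N.
Proof.
elim: t up => // t IH up; rewrite /= !size_cat !size_map !IH expnS.
by case: up => /=; have := expn_gt0 2 t; lia.
Qed.

Section ForcedAscent.
Variables (m : nat) (f : asg m -> int).

Definition improving (x : asg m) (p : nat * nat) : bool := f x < f (flip x p).

Definition only_improving (x : asg m) (p : nat * nat) : Prop :=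
  [/\ (p.1 < m)%N, (p.2 < 8)%N &
      forall k i, (k < m)%N -> (i < 8)%N -> improving x (k, i) = ((k, i) == p)].

Fixpoint forced (x : asg m) (ms : seq (nat * nat)) : Prop :=
  if ms is p :: ms' then only_improving x p /\ forced (flip x p) ms' else True.

Definition forced_to (x : asg m) ms (Q : asg m -> Prop) : Prop :=
  forced x ms /\ Q (foldl (@flip m) x ms).

Lemma forced_to_cat (x : asg m) ms1 ms2 R Q :
  forced_to x ms1 R -> (forall y, R y -> forced_to y ms2 Q) -> forced_to x (ms1 ++ ms2) Q.
Proof.
elim: ms1 x => [|p ms1 IH] x /= [hf hR] K; first exact: K.
by case: hf => hp hf; have [hf' hQ] := IH _ (conj hf hR) K.
Qed.

Lemma eq_pair_val (w v : 'I_m * 'I_8) :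
  ((w.1 : nat) == v.1) && ((w.2 : nat) == v.2) = (w == v).
Proof. by case: w v => [a b] [c d]. Qed.

Lemma adjacent_flip (x : asg m) (v : 'I_m * 'I_8) : adjacent x (flip x (v.1 : nat, v.2 : nat)).
Proof.
rewrite /adjacent (_ : [set w | _] = [set v]) ?cards1 //; apply/setP => w.
by rewrite !inE ffunE /= eq_pair_val; case: (w == v); case: (x w).
Qed.

Lemma adjacentP (x y : asg m) :
  adjacent x y -> exists v : 'I_m * 'I_8, y = flip x (v.1 : nat, v.2 : nat).
Proof.
case/cards1P => v /setP hv; exists v; apply/ffunP => w; rewrite ffunE /= eq_pair_val.
by move: (hv w); rewrite !inE; case: (w == v); case: (x w); case: (y w).
Qed.

Lemma last_scanl (x : asg m) ms : last x (scanl (@flip m) x ms) = foldl (@flip m) x ms.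
Proof. by elim: ms x => //= p ms IH x; rewrite IH. Qed.

Lemma local_peak_stable (x : asg m) :
  (forall k i, (k < m)%N -> (i < 8)%N -> ~~ improving x (k, i)) -> local_peak f x.
Proof.
move=> h y /adjacentP [v ->].
by have := h _ _ (ltn_ord v.1) (ltn_ord v.2); rewrite /improving -leNgt.
Qed.

Lemma forced_ascent (x : asg m) ms :
  forced x ms -> local_peak f (foldl (@flip m) x ms) ->
  ascent f x (scanl (@flip m) x ms) /\
  forall q, ascent f x q -> q = scanl (@flip m) x ms.
Proof.
elim: ms x => [|p ms IH] x /=.
  move=> _ hpeak; split => // -[//|y q] [/= /andP [/andP [hxy hlt] _] _].
  by have := hpeak y hxy; rewrite leNgt hlt.
case=> -[hp1 hp2 honly] hforced hpeak.
have hstep : ascent_step f x (flip x p).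
  rewrite /ascent_step (adjacent_flip x (Ordinal hp1, Ordinal hp2)) /=.
  by have := honly _ _ hp1 hp2; rewrite -surjective_pairing eqxx.
have [[hpath hlast] huniq] := IH _ hforced hpeak.
split; first by split; rewrite /= ?hstep.
move=> [|y q] [/= hq hqpeak].
  have := hqpeak _ (adjacent_flip x (Ordinal hp1, Ordinal hp2)).
  by case/andP: hstep => _; rewrite leNgt => ->.
case/andP: hq => /andP [/adjacentP [v ey] hlt] hq.
have := honly _ _ (ltn_ord v.1) (ltn_ord v.2); rewrite /improving -ey hlt.
move=> /esym/eqP ev; rewrite ev in ey; subst y.
by rewrite (huniq q).
Qed.

End ForcedAscent.

Section Landscape.
Variables (n m : nat) (P : bool).
Hypothesis hmn : (m <= n)%N.

Local Notation improving := (improving (fit n P)).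
Local Notation next6 := (next6 P).

Lemma improving_gain (x : asg m) k i : (k < m)%N -> (i < 8)%N ->
  improving x (k, i) =
  (0 < gain (k == 0)%N (Mk n k.+1) (sk n k.+1) (bit x k) (next6 x k) (bit x k.+1 6)
          (bit x k.-1 0) (bit x k.-1 7) i).
Proof. by move=> hk hi; rewrite /improving -subr_gt0 fit_flip. Qed.

Definition block_is (x : asg m) k S := forall i, (i < 8)%N -> bit x k i = bits S i.
Definition zero_below (x : asg m) t := forall k i, (k < t)%N -> (i < 8)%N -> bit x k i = 0.
(* [tail x t c]: the blocks below t are those of a (c = false) or of b
   (c = true) for a landscape of t blocks. *)
Definition tail (x : asg m) t (c : bool) :=
  (0 < t)%N -> block_is x t.-1 (pattern c) /\ zero_below x t.-1.
Definition agree_from (x y : asg m) t := forall k i, (t <= k)%N -> bit x k i = bit y k i.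
Definition stable_above (x : asg m) t (lowB : bool) :=
  forall y, agree_from x y t -> bit y t.-1 7 = b2i lowB ->
  forall k i, (t <= k < m)%N -> (i < 8)%N -> ~~ improving y (k, i).

Lemma bits_pattern_false i : bits (pattern false) i = 0.
Proof. by rewrite /bits nth_nseq if_same. Qed.

Lemma bits_pattern c :
  [/\ bits (pattern c) 0 = b2i c, bits (pattern c) 5 = 0 & bits (pattern c) 7 = b2i c].
Proof. by case: c. Qed.

Lemma tail_falseE (x : asg m) t : tail x t false <-> zero_below x t.
Proof.
split=> [htail k i hk hi | hz t0].
  have [hb hz] := htail (leq_ltn_trans (leq0n k) hk).
  by case: (ltngtP k t.-1) => hkt; [exact: hz | lia | rewrite hkt hb // bits_pattern_false].
by split=> [i hi | k i hk hi]; rewrite ?bits_pattern_false hz //; lia.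
Qed.

Lemma improving_cert (x : asg m) k S nA p1 pB tgt :
  (k < m)%N -> block_is x k S -> bit x k.+1 6 = nA ->
  ((0 < k)%N -> bit x k.-1 0 = p1 /\ bit x k.-1 7 = pB) ->
  gain_cert (k == 0)%N S (next6 x k) nA p1 pB tgt ->
  forall i, (i < 8)%N -> improving x (k, i) = (Some i == tgt).
Proof.
move=> hk hS hA hlow cert i hi.
rewrite improving_gain // (eq_gain _ _ _ _ _ _ _ hS) // hA.
have hw := weights_Mk_sk (leq_trans hk hmn).
case: k hk hS hA hlow cert hw => [|k] hk _ _ hlow cert hw.
  by rewrite (gain_first_low _ _ _ _ _ _ _ p1 pB); exact: gain_certP.
by have [-> ->] := hlow isT; exact: gain_certP.
Qed.

Lemma tail_stable (x : asg m) t c : (t <= m)%N -> tail x t c ->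
  ((0 < t)%N -> next6 x t.-1 = b2i c) ->
  forall k i, (k < t)%N -> (i < 8)%N -> ~~ improving x (k, i).
Proof.
move=> htm htail h6 k i hk hi.
have t0 : (0 < t)%N by lia.
have [hblock hzero] := htail t0.
have rest c' : block_is x k (pattern c') -> next6 x k = b2i c' -> ~~ improving x (k, i).
  move=> hS h6'; rewrite (improving_cert (p1 := 0) (pB := 0) (tgt := None) _ hS erefl) //.
  - lia.
  - by move=> k0; rewrite !hzero //; lia.
  - move: (rest_certP c') => /allP/(_ (k == 0)%N); rewrite h6'.
    by case: (k == 0)%N => /(_ isT)/allP; apply; exact: bit01.
case: (ltngtP k t.-1) => hkt; last by apply: (rest c); rewrite hkt; [exact: hblock | exact: h6].
  apply: (rest false) => [j hj|]; first by rewrite hzero // bits_pattern_false.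
  rewrite /next6 (_ : (k.+1 == m) = false); last by lia.
  case: (ltngtP k.+1 t.-1) => hk1; [by rewrite hzero | lia |].
  by rewrite hk1 hblock //; case: (bits_pattern c) => _ -> _.
lia.
Qed.

Definition in_run (z s : asg m) t S c :=
  [/\ agree_from z s t.+1, block_is s t S & tail s t c].

Section Block.
Variables (up : bool) (z : asg m) (t : nat).
Hypotheses (ht : (t < m)%N) (hz6 : next6 z t = b2i up)
  (hzA : bit z t.+1 6 \in nextA_range up) (hzs : stable_above z t.+1 (~~ up)).

Lemma next6_below (s : asg m) S : block_is s t S -> (0 < t)%N -> next6 s t.-1 = bits S 5.
Proof.
move=> hS t0; rewrite /next6 prednK // hS // (_ : (t == m) = false) ?addr0 //; lia.
Qed.

Lemma step_forced s S c i :
  in_run z s t S c -> step_cert up c S i -> only_improving (fit n P) s (t, i).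
Proof.
move=> [hzs' hS htail] /and4P [hi h5 h7 cert]; split => // k j hk hj.
case: (ltngtP k t) => hkt.
- rewrite (negbTE (tail_stable _ htail _ hkt hj)); first by rewrite xpair_eqE (ltn_eqF hkt).
    lia.
  by move=> t0; rewrite (next6_below hS t0) /bits (eqP h5).
- have hB : bit s t 7 = b2i (~~ up) by rewrite hS // /bits (eqP h7).
  have hkm : (t.+1 <= k < m)%N by lia.
  by rewrite (negbTE (hzs hzs' hB hkm hj)) xpair_eqE (gtn_eqF hkt).
- subst k; rewrite (improving_cert (nA := bit z t.+1 6) (p1 := b2i c) (pB := b2i c)
                                   (tgt := Some i) ht hS) ?xpair_eqE ?eqxx //.
  + by rewrite hzs'.
  + by move=> t0; have [hb _] := htail t0; rewrite !hb //; case: (bits_pattern c) => -> _ ->.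
  + have -> : next6 s t = b2i up by rewrite -hz6 /next6 hzs'.
    by move: cert => /allP/(_ (t == 0)%N); case: (t == 0)%N => /(_ isT)/allP/(_ _ hzA).
Qed.

Lemma in_run_flip s S c i : (i < 8)%N ->
  in_run z s t S c -> in_run z (flip s (t, i)) t (toggle_at S i) c.
Proof.
move=> hi [hzs' hS htail]; have bf k j := @bit_flip m s (t, i) k j ht hi.
split=> [k j hk | j hj | t0].
- by rewrite bf /= (_ : k == t = false) ?hzs' //; lia.
- by rewrite bf /= bits_toggle_at /toggle eqxx hS //; case: (j == i) => //; rewrite hS.
- have [hb hz] := htail t0; split=> [j hj | k j hk hj]; rewrite bf /= ifF ?hb ?hz //; lia.
Qed.

Lemma phase_forced s S c l rest Q :
  in_run z s t S c -> phase_cert up c S l ->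
  (forall s', in_run z s' t (foldl toggle_at S l) c -> forced_to (fit n P) s' rest Q) ->
  forced_to (fit n P) s ([seq (t, i) | i <- l] ++ rest) Q.
Proof.
elim: l s S => [|i l IH] s S I /=; first by move=> _; apply.
case/andP=> hstep hl K; have [hi _ _ _] := and4P hstep.
have [hf hQ] := IH _ _ (in_run_flip hi I) hl K.
by split; first split; [exact: step_forced hstep | exact: hf | exact: hQ].
Qed.

Lemma wait_stable s W up' : (0 < t)%N ->
  in_run z s t W (~~ up') -> wait_cert up W up' -> stable_above s t (~~ up').
Proof.
move=> t0 [hzs' hW _] /and4P [_ h7 _ cert] y hsy hyB k i /andP [htk hkm] hi.
case: (ltngtP t k) => hkt; [|lia|].
- have hzy : agree_from z y t.+1 by move=> k' i' hk'; rewrite hzs' // hsy //; lia.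
  have hB : bit y t 7 = b2i (~~ up) by rewrite -hsy // hW // /bits (eqP h7).
  by apply: hzs hzy hB _ _ _ hi; lia.
- subst k; rewrite (improving_cert (nA := bit z t.+1 6) (p1 := bit y t.-1 0)
                                   (pB := b2i (~~ up')) (S := W) (tgt := None) ht) //.
  + by move=> j hj; rewrite -hsy // hW.
  + by rewrite -hsy // hzs'.
  + have -> : next6 y t = b2i up by rewrite -hz6 /next6 -hsy // hzs'.
    rewrite (_ : (t == 0)%N = false); last by lia.
    by move: cert => /allP/(_ _ (bit01 y t.-1 0))/allP/(_ _ hzA).
Qed.

Lemma subrun_forced s W up' rest Q :
  in_run z s t W (~~ up') -> wait_cert up W up' ->
  (forall z', tail z' t (~~ up') -> next6 z' t.-1 = b2i up' ->
     bit z' t 6 \in nextA_range up' -> stable_above z' t (~~ up') ->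
     forced_to (fit n P) z' (run up' t) (fun y => agree_from z' y t /\ tail y t up')) ->
  (forall y, in_run z y t W up' -> forced_to (fit n P) y rest Q) ->
  forced_to (fit n P) s (run up' t ++ rest) Q.
Proof.
move=> I w IH K; have [hzs' hW htail] := I; have [h5 _ hA _] := and4P w.
case: (posnP t) => [t0 | t0].
  by rewrite t0 /=; apply: K; split=> //; rewrite /tail t0.
apply: (forced_to_cat (IH s htail _ _ (wait_stable t0 I w))) => [||y [hsy htail']].
- by rewrite (next6_below hW t0) /bits (eqP h5).
- by rewrite hW.
apply: K; split=> // [k i hk | i hi]; first by rewrite hzs' ?hsy //; lia.
by rewrite -hsy ?hW.
Qed.

End Block.

Lemma run_forced up t : (t <= m)%N ->
  forall z, tail z t (~~ up) -> next6 z t.-1 = b2i up -> bit z t 6 \in nextA_range up ->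
  stable_above z t (~~ up) ->
  forced_to (fit n P) z (run up t) (fun y => agree_from z y t /\ tail y t up).
Proof.
elim: t up => [|t IH] up ht z hz h6 hA hs; first by split.
have ht' : (t < m)%N := ht.
have [c1 w1 c2 w2 /andP [c3 hend]] := and5P (run_certP up).
have [hblock hzero] := hz isT.
have I0 : in_run z z t (pattern (~~ up)) false by split=> //; apply/tail_falseE.
apply: (phase_forced ht' h6 hA hs I0 c1) => s1 I1.
apply: (subrun_forced (up' := true) ht' h6 hA hs I1 w1 (IH true (ltnW ht))) => s2 I2.
apply: (phase_forced ht' h6 hA hs I2 c2) => s3 I3.
apply: (subrun_forced (up' := false) ht' h6 hA hs I3 w2 (IH false (ltnW ht))) => s4 I4.
apply: (phase_forced ht' h6 hA hs I4 c3) => s5 [hzs5 hS5 /tail_falseE htail5].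
by split=> //; split=> // _; rewrite -(eqP hend).
Qed.

Lemma next6_top (x : asg m) : (0 < m)%N -> next6 x m.-1 = b2i P.
Proof. by move=> m0; rewrite /next6 prednK // /bit X_out // eqxx add0r mul1r. Qed.

Lemma top_forced up (x : asg m) : (0 < m)%N -> P = up ->
  tail x m (~~ up) -> forced_to (fit n P) x (run up m) (fun y => tail y m up).
Proof.
move=> m0 hP hx.
have h6 : next6 x m.-1 = b2i up by rewrite next6_top // hP.
have hA : bit x m 6 \in nextA_range up by rewrite /bit X_out //; case: up {hP hx h6}.
have hs : stable_above x m (~~ up) by move=> y _ _ k i /andP [hk hkm]; lia.
by have [hf [_ hy]] := run_forced (leqnn m) hx h6 hA hs.
Qed.

Lemma tail_peak up (y : asg m) : (0 < m)%N -> P = up -> tail y m up -> local_peak (fit n P) y.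
Proof.
move=> m0 hP hy; apply: local_peak_stable => k i hk hi.
by apply: (tail_stable (leqnn m) hy _ hk hi) => _; rewrite next6_top // hP.
Qed.

End Landscape.

Definition asg_ab m (c : bool) : asg m := if c then asg_b m else asg_a m.

Lemma bit_ord m (x : asg m) (k : 'I_m) (i : 'I_8) : bit x k i = b2i (x (k, i)).
Proof. by rewrite /bit /X /= !valK. Qed.

Lemma asg_eq m (x y : asg m) :
  (forall k i, (k < m)%N -> (i < 8)%N -> bit x k i = bit y k i) -> x = y.
Proof.
move=> h; apply/ffunP => -[k i]; have := h k i (ltn_ord k) (ltn_ord i).
by rewrite !bit_ord; case: (x _); case: (y _).
Qed.

Lemma bit_asg_ab m c k i : (k < m)%N -> (i < 8)%N ->
  bit (asg_ab m c) k i = if k == m.-1 then bits (pattern c) i else 0.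
Proof.
move=> hk hi; rewrite -[k]/(Ordinal hk : nat) -[i]/(Ordinal hi : nat) bit_ord.
by case: c; rewrite ffunE //=; case: (k == m.-1); case: i hi => [|[|[|[|[|[|[|[|?]]]]]]]].
Qed.

Lemma tailP m c (y : asg m) : (0 < m)%N -> tail y m c <-> y = asg_ab m c.
Proof.
move=> m0; split=> [hy | -> _].
  have [hb hz] := hy m0; apply: asg_eq => k i hk hi; rewrite bit_asg_ab //.
  by case: (ltngtP k m.-1) => hkm; [rewrite hz | lia | rewrite hkm hb].
by split=> [i hi | k i hk hi]; rewrite bit_asg_ab ?eqxx ?ifF //; lia.
Qed.

Lemma top_ascent n m up : (0 < m)%N -> (m <= n)%N ->
  exists p, [/\ ascent (fit n up) (asg_ab m (~~ up)) p,
                forall q, ascent (fit n up) (asg_ab m (~~ up)) q -> q = p,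
                last (asg_ab m (~~ up)) p = asg_ab m up &
                size p = (10 * (2 ^ m - 1))%N].
Proof.
move=> m0 hmn; set x := asg_ab m (~~ up).
have [hforced hend] := top_forced hmn m0 (erefl up) ((tailP _ x m0).2 erefl).
have [hasc huniq] := forced_ascent hforced (tail_peak hmn m0 (erefl up) hend).
exists (scanl (@flip m) x (run up m)); split=> //.
- by rewrite last_scanl; apply/tailP.
- by rewrite size_scanl size_run.
Qed.

Theorem theorem4p1 (n m : nat) (hn : (1 <= n)%N) (hm1 : (1 <= m)%N) (hmn : (m <= n)%N) :
  (exists p : seq (asg m),
      [/\ ascent (fit n true) (asg_a m) p,
          (forall q, ascent (fit n true) (asg_a m) q -> q = p),
          last (asg_a m) p = asg_b m &
          size p = (10 * (2 ^ m - 1))%N])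
  /\
  (exists p : seq (asg m),
      [/\ ascent (fit n false) (asg_b m) p,
          (forall q, ascent (fit n false) (asg_b m) q -> q = p),
          last (asg_b m) p = asg_a m &
          size p = (10 * (2 ^ m - 1))%N]).
Proof. by split; [exact: top_ascent true hm1 hmn | exact: top_ascent false hm1 hmn]. Qed.
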